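(* Let $S$ and $Z$ be finite nonempty alphabets with $\#Z\le \#S$, let $\tau:S\to Z$ be surjective, and let $(\Sigma,\sigma_\tau)$ be the associated full zip shift space. Then the set of periodic points of $\sigma_\tau$ (points $p\in\Sigma$ with $\sigma_\tau^n(p)=p$ for some $n\ge 1$) is dense in $\Sigma$.
   Context: The zip shift space is $\Sigma=\Sigma_{Z,S}$, the set of bi-infinite sequences $x=(x_i)_{i\in\mathbb{Z}}$ with $x_i\in S$ for all $i\ge 0$ and $x_i\in Z$ for all $i<0$. It carries the metric $d(x,y)=2^{-M(x,y)}$, where $M(x,y)=\min\{|i| : x_i\neq y_i\}$ (and $d(x,x)=0$); cylinder sets $[s_i\cdots s_{i+\ell}]=\{x\in\Sigma: x_j=s_j,\ i\le j\le i+\ell\}$ form a basis of the topology. The (full) zip shift map $\sigma_\tau:\Sigma\to\Sigma$ is defined by $(\sigma_\tau x)_i=x_{i+1}$ for all $i\neq -1$ and $(\sigma_\tau x)_{-1}=\tau(x_0)$; i.e. $\sigma_\tau(\cdots x_{-2}x_{-1}.x_0x_1x_2\cdots)=(\cdots x_{-2}x_{-1}\tau(x_0).x_1x_2\cdots)$. *)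

From mathcomp Require Import all_boot.
From Stdlib Require Import Reals ClassicalEpsilon.
Set Implicit Arguments. Unset Strict Implicit. Unset Printing Implicit Defensive.

(* A point x = (x_i)_{i in Z} of the zip shift space Sigma_{Z,S}:
   zneg k = x_{-(k+1)} in Z (k : nat),  spos k = x_k in S (k : nat). *)
Record zpoint (Z S : Type) := ZPoint { zneg : nat -> Z ; spos : nat -> S }.

Definition agree_upto (Z S : Type) (x y : zpoint Z S) (m : nat) : Prop :=
  (forall k, (k < m)%N -> spos x k = spos y k) /\
  (forall k, (k.+1 < m)%N -> zneg x k = zneg y k).

Definition differ_at (Z S : Type) (x y : zpoint Z S) (m : nat) : Prop :=
  spos x m <> spos y m \/ (0 < m)%N /\ zneg x m.-1 <> zneg y m.-1.

Definition is_M (Z S : Type) (x y : zpoint Z S) (m : nat) : Prop :=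
  agree_upto x y m /\ differ_at x y m.

Definition zdist (Z S : Type) (x y : zpoint Z S) : R :=
  match excluded_middle_informative (exists m, is_M x y m) with
  | left h => (/ 2 ^ (proj1_sig (constructive_indefinite_description _ h)))%R
  | right _ => 0%R
  end.

Definition zip_shift (Z S : Type) (tau : S -> Z) (x : zpoint Z S) : zpoint Z S :=
  ZPoint (fun k => match k with 0 => tau (spos x 0) | k'.+1 => zneg x k' end)
         (fun k => spos x k.+1).

Definition periodic_pt (Z S : Type) (tau : S -> Z) (p : zpoint Z S) : Prop :=
  exists n, (1 <= n)%N /\ iter n (zip_shift tau) p = p.

(* Repeat with period 2N+1 the word x_0 ... x_(N-1) s y_(-N) ... y_(-1),
   where y_i is a tau-preimage of x_i and s is arbitrary.  Along the orbit of
   such a point every negative coordinate is tau of a nonnegative one, and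
   surjectivity of tau makes the point agree with x on all indices |i| < N,
   i.e. lie within 2^-N of x. *)
From mathcomp Require Import all_boot.
From Stdlib Require Import Reals Lra FunctionalExtensionality ClassicalEpsilon.
From mathcomp Require Import zify.

Set Implicit Arguments.
Unset Strict Implicit.

Lemma zpoint_ext (Z S : Type) (x y : zpoint Z S) :
  zneg x =1 zneg y -> spos x =1 spos y -> x = y.
Proof.
by case: x y => [xn xp] [yn yp] /= /functional_extensionality ->
  /functional_extensionality ->.
Qed.

Section ZipShiftOrbits.

Variables (Z S : Type) (tau : S -> Z).

Lemma spos_iter_zip_shift n x k :
  spos (iter n (zip_shift tau) x) k = spos x (k + n).
Proof. by elim: n k => [|n IHn] k /=; rewrite ?addn0 // IHn addSnnS. Qed.

Lemma zneg_iter_zip_shift n x k :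
  zneg (iter n (zip_shift tau) x) k =
  if (k < n)%N then tau (spos x (n - k.+1)) else zneg x (k - n).
Proof.
elim: n k => [|n IHn] [|k] /=; rewrite ?subn0 //.
by rewrite spos_iter_zip_shift subn1.
Qed.

(* Index -(k+1) is congruent to n - (k %% n).+1 modulo n. *)
Definition periodic_ext (n : nat) (w : nat -> S) : zpoint Z S :=
  ZPoint (fun k => tau (w (n - (k %% n).+1))) (fun k => w (k %% n)).

Lemma iter_periodic_ext n w :
  (0 < n)%N -> iter n (zip_shift tau) (periodic_ext n w) = periodic_ext n w.
Proof.
move=> n_gt0; apply: zpoint_ext => k.
  rewrite zneg_iter_zip_shift /=; case: ltnP => [lt_kn | le_nk].
    by rewrite !modn_small //; lia.
  by rewrite -{2}(subnK le_nk) modnDr.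
by rewrite spos_iter_zip_shift /= modnDr.
Qed.

Lemma periodic_ext_periodic n w :
  (0 < n)%N -> periodic_pt tau (periodic_ext n w).
Proof. by move=> n_gt0; exists n; split; last exact: iter_periodic_ext. Qed.

Definition window (sec : Z -> S) (x : zpoint Z S) (N : nat) (j : nat) : S :=
  if (j < N)%N then spos x j else sec (zneg x (N.*2 - j)).

Lemma agree_upto_periodic_window sec x N :
  cancel sec tau -> agree_upto x (periodic_ext N.*2.+1 (window sec x N)) N.
Proof.
move=> secK; split=> k lt_kN /=; rewrite modn_small /window; try lia.
  by rewrite lt_kN.
have -> : (N.*2.+1 - k.+1 < N)%N = false by lia.
by rewrite secK; congr (zneg x _); lia.
Qed.

End ZipShiftOrbits.

Lemma zdist_le_agree_upto (Z S : Type) (x y : zpoint Z S) N :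
  agree_upto x y N -> (zdist x y <= / 2 ^ N)%R.
Proof.
move=> [agree_pos agree_neg]; rewrite /zdist.
have pow2_gt0 m : (0 < 2 ^ m)%R by apply: pow_lt; lra.
case: excluded_middle_informative => [hM|_]; last exact/Rlt_le/Rinv_0_lt_compat.
case: (constructive_indefinite_description _ hM) => m [_ differ] /=.
have le_Nm : (N <= m)%N.
  rewrite leqNgt; apply/negP=> lt_mN.
  case: differ => [|[m_gt0]]; apply.
    exact: agree_pos.
  by apply: agree_neg; rewrite prednK.
by apply: Rinv_le_contravar => //; apply: Rle_pow; [lra | apply/leP].
Qed.

Lemma exists_inv_pow2_lt {eps : R} : (0 < eps)%R -> exists N, (/ 2 ^ N < eps)%R.
Proof.
move=> eps_gt0; have half_lt1 : (Rabs (/ 2) < 1)%R by rewrite Rabs_pos_eq; lra.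
have [N HN] := pow_lt_1_zero _ half_lt1 _ eps_gt0; exists N.
have := HN N (le_n N); rewrite pow_inv Rabs_pos_eq //.
by apply/Rlt_le/Rinv_0_lt_compat/pow_lt; lra.
Qed.

Theorem theorem1 (S Z : finType) (tau : S -> Z) :
  (0 < #|S|)%N -> (0 < #|Z|)%N -> (#|Z| <= #|S|)%N ->
  (forall z : Z, exists s : S, tau s = z) ->
  forall (x : zpoint Z S) (eps : R), (0 < eps)%R ->
    exists p : zpoint Z S, periodic_pt tau p /\ (zdist x p < eps)%R.
Proof.
move=> _ _ _ tau_surj x eps eps_gt0.
have [sec secK] := ClassicalEpsilon.choice (fun z s => tau s = z) tau_surj.
have [N lt_eps] := exists_inv_pow2_lt eps_gt0.
exists (periodic_ext tau N.*2.+1 (window sec x N)); split.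
  exact: periodic_ext_periodic.
apply: Rle_lt_trans lt_eps; apply: zdist_le_agree_upto.
exact: agree_upto_periodic_window.
Qed.
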